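(* Consider a bipartite system with OPF sets $\mathcal F_{d_{\sf A}}$, $\mathcal F_{d_{\sf B}}$, $\mathcal F_{d_{\sf A}d_{\sf B}}$ and affine representations $\Gamma^{d_{\sf A}}$, $\Gamma^{d_{\sf B}}$, $\Gamma^{d_{\sf A}d_{\sf B}}$. If the restriction of $\Gamma^{d_{\sf A}d_{\sf B}}$ to $\mathrm{SU}(d_{\sf A})\times\mathrm{SU}(d_{\sf B})$ (embedded as $U_{\sf A}\otimes U_{\sf B}$) contains a subrepresentation $1^{d_{\sf A}}\boxtimes1^{d_{\sf B}}$, then the composite system is holistic, i.e. not locally tomographic: for bases $\{F^i_{\sf A}\}$ of $V_{d_{\sf A}}$ and $\{F^j_{\sf B}\}$ of $V_{d_{\sf B}}$, $\{F^i_{\sf A}\star F^j_{\sf B}\}_{i,j}$ is not a basis of $V_{d_{\sf A}d_{\sf B}}$.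
   Context: An OPF on $\mathbb C^d$ is a function from rays of $\mathbb C^d$ to $[0,1]$; $\mathcal F_d$ contains the unit OPF ${\bf u}\equiv1$, satisfies (C1): $F\circ U:\psi\mapsto F(U\psi)$ is in $\mathcal F_d$ for $F\in\mathcal F_d$, $U\in\mathrm{SU}(d)$, and the Finiteness Principle: the real span $V_d$ of $\mathcal F_d$ is finite-dimensional. The associated representation $\bar\Gamma^d$ on $V_d$ is $\bar\Gamma^d(U)F=F\circ U$; it contains the trivial representation $1^d$ exactly once (spanned by ${\bf u}$), and the affine representation $\Gamma^d$ is defined by $\bar\Gamma^d=1^d\oplus\Gamma^d$. The product $\star:\mathcal F_{d_{\sf A}}\times\mathcal F_{d_{\sf B}}\to\mathcal F_{d_{\sf A}d_{\sf B}}$ is bilinear, satisfies ${\bf u}_{\sf A}\star{\bf u}_{\sf B}={\bf u}_{{\sf A}{\sf B}}$, and $(F_{\sf A}\star F_{\sf B})\circ(U_{\sf A}\otimes U_{\sf B})=(F_{\sf A}\circ U_{\sf A})\star(F_{\sf B}\circ U_{\sf B})$. $1^d$ is the trivial representation of $\mathrm{SU}(d)$ and $\boxtimes$ the outer tensor product. *)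

From HB Require Import structures.
From mathcomp Require Import all_boot all_order all_algebra.
From mathcomp Require Import complex mxtens.
From mathcomp Require Import reals.

Set Implicit Arguments.
Unset Strict Implicit.
Unset Printing Implicit Defensive.

Import Order.TTheory GRing.Theory Num.Theory.
Local Open Scope ring_scope.

Section OPF.
Variable R : realType.
Local Notation C := (R[i]).

(* Rays of C^d are represented by nonzero vectors; a function on rays is a
   function on nonzero vectors that is invariant under nonzero rescaling
   (this invariance is imposed in [OPF_set]). *)
Definition nzvec (d : nat) := {v : 'cV[C]_d | v != 0}.
Definition ray_fun (d : nat) := nzvec d -> R.

(* action of a matrix on a nonzero vector (the fallback [psi] is only used
   when [M *m psi = 0], which never happens for invertible M) *)
Definition actv d (M : 'M[C]_d) (psi : nzvec d) : nzvec d :=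
  odflt psi (insub (M *m val psi)).

(* rescaling of a nonzero vector (fallback only used for c = 0) *)
Definition scalev d (c : C) (psi : nzvec d) : nzvec d :=
  odflt psi (insub (c *: val psi)).

Definition opf_comp d (F : ray_fun d) (M : 'M[C]_d) : ray_fun d :=
  fun psi => F (actv M psi).

Definition is_SU d (U : 'M[C]_d) : Prop :=
  (map_mx conjc U)^T *m U = 1%:M /\ \det U = 1.

Definition unit_fun d : ray_fun d := fun _ => 1.

Definition lin_comb d (I : finType) (c : I -> R) (g : I -> ray_fun d)
  : ray_fun d := fun psi => \sum_(i : I) c i * g i psi.

Definition span d (S : ray_fun d -> Prop) (f : ray_fun d) : Prop :=
  exists n (c : 'I_n -> R) (g : 'I_n -> ray_fun d),
    (forall i, S (g i)) /\ f = lin_comb c g.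

Definition finite_dim d (S : ray_fun d -> Prop) : Prop :=
  exists n (g : 'I_n -> ray_fun d),
    forall f, span S f -> span (fun h => exists i, h = g i) f.

Definition lin_indep d (I : finType) (b : I -> ray_fun d) : Prop :=
  forall c : I -> R, lin_comb c b = (fun _ => 0) -> forall i, c i = 0.

Definition is_basis d (S : ray_fun d -> Prop) (I : finType)
  (b : I -> ray_fun d) : Prop :=
  [/\ forall i, span S (b i), lin_indep b &
      forall f, span S f -> span (fun h => exists i, h = b i) f].

(* The trivial representation occurs in bar-Gamma^d exactly once, spanned by
   the unit OPF: the SU(d)-fixed vectors of V_d are exactly the multiples of u. *)
Definition trivial_once d (S : ray_fun d -> Prop) : Prop :=
  forall f, span S f ->
    ((forall U, is_SU U -> opf_comp f U = f) <-> exists a : R, f = (fun _ => a)).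

Definition OPF_set d (S : ray_fun d -> Prop) : Prop :=
  S (@unit_fun d) /\
  (forall F psi, S F -> 0 <= F psi <= 1) /\
  (forall F psi (c : C), S F -> c != 0 -> F (scalev c psi) = F psi) /\
  (forall F U, S F -> is_SU U -> S (opf_comp F U)) /\
  finite_dim S /\
  trivial_once S.

Definition OPF_product dA dB (SA : ray_fun dA -> Prop) (SB : ray_fun dB -> Prop)
  (SAB : ray_fun (dA * dB) -> Prop)
  (star : ray_fun dA -> ray_fun dB -> ray_fun (dA * dB)) : Prop :=
  [/\ (forall F G, SA F -> SB G -> SAB (star F G)),
      (forall (a : R) F F' G, span SA F -> span SA F' -> span SB G ->
         star (fun psi => a * F psi + F' psi) G
         = (fun psi => a * star F G psi + star F' G psi)),
      (forall (a : R) F G G', span SA F -> span SB G -> span SB G' ->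
         star F (fun psi => a * G psi + G' psi)
         = (fun psi => a * star F G psi + star F G' psi)),
      star (@unit_fun dA) (@unit_fun dB) = @unit_fun (dA * dB) &
      (forall F G UA UB, SA F -> SB G -> is_SU UA -> is_SU UB ->
         opf_comp (star F G) (UA *t UB) = star (opf_comp F UA) (opf_comp G UB))].

(* W is (the carrier of) the affine representation Gamma^d: an SU(d)-invariant
   subspace of V_d with V_d = R u (+) W. *)
Definition affine_rep d (S : ray_fun d -> Prop) (W : ray_fun d -> Prop) : Prop :=
  (forall f, W f -> span S f) /\
  W (fun _ => 0) /\
  (forall (a : R) f g, W f -> W g -> W (fun psi => a * f psi + g psi)) /\
  (forall f U, W f -> is_SU U -> W (opf_comp f U)) /\
  (forall a : R, W (fun _ => a) -> a = 0) /\
  (forall f, span S f -> exists w (a : R), W w /\ f = (fun psi => w psi + a)).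

End OPF.

From Pilot Require Import Defs.
From HB Require Import structures.
From mathcomp Require Import all_boot all_order all_algebra.
From mathcomp Require Import complex mxtens.
From mathcomp Require Import reals.
From Stdlib Require Import FunctionalExtensionality ClassicalEpsilon.

Set Implicit Arguments.
Unset Strict Implicit.
Unset Printing Implicit Defensive.

Import Order.TTheory GRing.Theory Num.Theory.
Local Open Scope ring_scope.

(* If the products [bA i ⋆ bB j] formed a basis of V_AB, a nonzero invariant [w]
   of the affine part could be expanded uniquely as [\sum_j f_j ⋆ bB j].
   Equivariance of ⋆ and uniqueness of the coefficients [f_j] make each [f_j]
   SU(dA)-invariant, hence constant, so that [w = u ⋆ g].  The same argument in
   the second factor makes [g] constant, so [w] is a constant function; but the
   affine part contains no nonzero constant. *)

Section Spans.
Variables (R : realType) (d : nat).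
Implicit Types (S P : ray_fun R d -> Prop) (f g : ray_fun R d).

Definition lin_closed P :=
  P (fun _ => 0) /\
  forall (a : R) f g, P f -> P g -> P (fun psi => a * f psi + g psi).

Lemma lin_closed_big P (I : Type) (s : seq I) (c : I -> R) (g : I -> ray_fun R d) :
  lin_closed P -> (forall i, P (g i)) ->
  P (fun psi => \sum_(i <- s) c i * g i psi).
Proof.
move=> [P0 PD] Pg; elim: s => [|x s IH].
  by rewrite (_ : (fun _ => _) = fun _ => 0) //; extensionality psi; rewrite big_nil.
rewrite (_ : (fun _ => _) = fun psi => c x * g x psi + \sum_(i <- s) c i * g i psi).
  exact: PD.
by extensionality psi; rewrite big_cons.
Qed.

Lemma lin_closed_lin_comb P (I : finType) (c : I -> R) (g : I -> ray_fun R d) :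
  lin_closed P -> (forall i, P (g i)) -> P (lin_comb c g).
Proof. exact: lin_closed_big. Qed.

Lemma span_lin_closed S : lin_closed (Defs.span S).
Proof.
split.
  exists 0%N, (fun _ => 0), (fun _ => fun _ => 0); split; first by case.
  by extensionality psi; rewrite /lin_comb big_ord0.
move=> a _ _ [n1 [c1 [g1 [Sg1 ->]]]] [n2 [c2 [g2 [Sg2 ->]]]].
exists (n1 + n2)%N,
  (fun k => match split k with inl i => a * c1 i | inr j => c2 j end),
  (fun k => match split k with inl i => g1 i | inr j => g2 j end).
split; first by move=> k; case: (split k).
extensionality psi; rewrite /lin_comb big_split_ord /= mulr_sumr.
congr (_ + _); apply: eq_bigr => i _.
  by rewrite (unsplitK (inl _ : 'I_n1 + 'I_n2)) mulrA.
by rewrite (unsplitK (inr _ : 'I_n1 + 'I_n2)).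
Qed.

Lemma mem_span S f : S f -> Defs.span S f.
Proof.
exists 1%N, (fun _ => 1), (fun _ => f); split => //.
by extensionality psi; rewrite /lin_comb big_ord1 mul1r.
Qed.

Lemma span_lin_comb S (I : finType) (c : I -> R) (g : I -> ray_fun R d) :
  (forall i, Defs.span S (g i)) -> Defs.span S (lin_comb c g).
Proof. exact: lin_closed_lin_comb (span_lin_closed S). Qed.

Lemma span_const S (a : R) : S (@unit_fun R d) -> Defs.span S (fun _ => a).
Proof.
move=> Su; have [S0 SD] := span_lin_closed S.
rewrite (_ : (fun _ => a) = fun psi => a * @unit_fun R d psi + 0).
  exact: SD (mem_span Su) S0.
by extensionality psi; rewrite /unit_fun mulr1 addr0.
Qed.

Lemma span_opf_comp S f U :
  (forall F U, S F -> is_SU U -> S (opf_comp F U)) ->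
  Defs.span S f -> is_SU U -> Defs.span S (opf_comp f U).
Proof.
move=> SU [n [c [g [Sg ->]]]] HU.
by apply: span_lin_comb => i; apply/mem_span/SU.
Qed.

Lemma basis_coord S (I : finType) (b : I -> ray_fun R d) f :
  is_basis S b -> Defs.span S f -> exists c, f = lin_comb c b.
Proof.
move=> [_ _ spanb] /spanb [n [c [g [gb ->]]]].
apply: (lin_closed_lin_comb (P := fun f => exists c, f = lin_comb c b)) => [|k].
  split.
    exists (fun _ => 0); extensionality psi.
    by rewrite /lin_comb big1 // => i _; rewrite mul0r.
  move=> a _ _ [c1 ->] [c2 ->]; exists (fun i => a * c1 i + c2 i).
  extensionality psi; rewrite /lin_comb mulr_sumr -big_split.
  by apply: eq_bigr => i _; rewrite mulrDl mulrA.
have [i ->] := gb k; exists (fun j => (j == i)%:R); extensionality psi.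
rewrite /lin_comb (bigD1 i) //= eqxx mul1r big1 ?addr0 // => j /negbTE ->.
by rewrite mul0r.
Qed.

Lemma opf_comp1 f : opf_comp f 1%:M = f.
Proof. by extensionality psi; rewrite /opf_comp /actv mul1mx valK. Qed.

Lemma is_SU1 : is_SU (1%:M : 'M[R[i]]_d).
Proof.
split; last exact: det1.
by rewrite map_scalar_mx tr_scalar_mx mulmx1; congr _%:M; exact: conjc1.
Qed.

Lemma invariant_span_const S f : OPF_set S -> Defs.span S f ->
  (forall U, is_SU U -> opf_comp f U = f) -> exists a : R, f = (fun _ => a).
Proof. by move=> [_ [_ [_ [_ [_ trivial1]]]]] Sf /(trivial1 _ Sf). Qed.

Lemma ray_fun_dim0 f g : d = 0%N -> f = g.
Proof.
move=> d0; extensionality psi; case: psi => v /negP[].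
by apply/eqP/matrixP => i; have := ltn_ord i; rewrite [X in (_ < X)%N]d0.
Qed.

Lemma const_ray_fun_inj (a b : R) :
  (0 < d)%N -> (fun _ : nzvec R d => a) = (fun _ => b) -> a = b.
Proof.
move=> d_gt0; have nz1 : (const_mx 1 : 'cV[R[i]]_d) != 0.
  apply/eqP => /matrixP /(_ (Ordinal d_gt0) 0) /eqP.
  by rewrite !mxE oner_eq0.
pose psi0 : nzvec R d := exist (fun v => v != 0) _ nz1.
by move=> /(congr1 (fun h => h psi0)).
Qed.

End Spans.

Section LinearOn.
Variables (R : realType) (d d' : nat) (S : ray_fun R d -> Prop)
  (phi : ray_fun R d -> ray_fun R d').

Definition linear_on :=
  forall (a : R) f g, Defs.span S f -> Defs.span S g ->
    phi (fun psi => a * f psi + g psi) = (fun psi => a * phi f psi + phi g psi).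

Hypothesis phi_lin : linear_on.

Lemma linear_on0 : phi (fun _ => 0) = (fun _ => 0).
Proof.
have [S0 _] := span_lin_closed S.
move: (phi_lin (-1) S0 S0) => /=.
rewrite (_ : (fun _ => -1 * 0 + 0) = fun _ => 0); last first.
  by extensionality psi; rewrite mulr0 addr0.
by move=> ->; extensionality psi; rewrite mulN1r addNr.
Qed.

Lemma linear_on_big (I : Type) (s : seq I) (c : I -> R) (g : I -> ray_fun R d) :
  (forall i, Defs.span S (g i)) ->
  phi (fun psi => \sum_(i <- s) c i * g i psi)
  = (fun psi => \sum_(i <- s) c i * phi (g i) psi).
Proof.
move=> Sg; elim: s => [|x s IH].
  rewrite (_ : (fun _ => _) = fun _ => 0) ?linear_on0.
    by extensionality psi; rewrite big_nil.
  by extensionality psi; rewrite big_nil.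
rewrite (_ : (fun _ => _) = fun psi => c x * g x psi + \sum_(i <- s) c i * g i psi).
  rewrite phi_lin ?IH //; last exact: lin_closed_big (span_lin_closed S) Sg.
  by extensionality psi; rewrite big_cons.
by extensionality psi; rewrite big_cons.
Qed.

Lemma linear_on_lin_comb (I : finType) (c : I -> R) (g : I -> ray_fun R d) :
  (forall i, Defs.span S (g i)) ->
  phi (lin_comb c g) = lin_comb c (fun i => phi (g i)).
Proof. exact: linear_on_big. Qed.

Lemma linear_on_const (a : R) :
  S (@unit_fun R d) -> phi (fun _ => a) = (fun psi => a * phi (@unit_fun R d) psi).
Proof.
move=> Su; have [S0 _] := span_lin_closed S.
rewrite (_ : (fun _ => a) = fun psi => a * @unit_fun R d psi + 0); last first.
  by extensionality psi; rewrite /unit_fun mulr1 addr0.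
rewrite phi_lin ?linear_on0 //; last exact: mem_span.
by extensionality psi; rewrite addr0.
Qed.

End LinearOn.

Section Product.
Variables (R : realType) (dA dB : nat)
  (SA : ray_fun R dA -> Prop) (SB : ray_fun R dB -> Prop)
  (SAB : ray_fun R (dA * dB) -> Prop)
  (star : ray_fun R dA -> ray_fun R dB -> ray_fun R (dA * dB)).
Hypotheses (Hstar : OPF_product SA SB SAB star)
  (HA : OPF_set SA) (HB : OPF_set SB).

Let SA_unit : SA (@unit_fun R dA) := HA.1.
Let SB_unit : SB (@unit_fun R dB) := HB.1.

Lemma star_linear_l G : Defs.span SB G -> linear_on SA (star^~ G).
Proof. by case: Hstar => _ linl _ _ _ SG a F F' SF SF'; exact: linl. Qed.

Lemma star_linear_r F : Defs.span SA F -> linear_on SB (star F).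
Proof. by case: Hstar => _ _ linr _ _ SF a G G' SG SG'; exact: linr. Qed.

Lemma span_opf_compA F U : Defs.span SA F -> is_SU U -> Defs.span SA (opf_comp F U).
Proof. exact: span_opf_comp HA.2.2.2.1. Qed.

Lemma span_opf_compB G U : Defs.span SB G -> is_SU U -> Defs.span SB (opf_comp G U).
Proof. exact: span_opf_comp HB.2.2.2.1. Qed.

Lemma star_equivariant F G UA UB :
  Defs.span SA F -> Defs.span SB G -> is_SU UA -> is_SU UB ->
  opf_comp (star F G) (UA *t UB) = star (opf_comp F UA) (opf_comp G UB).
Proof.
move=> SF SG HUA HUB.
case: (SF) => n [c [g [Sg EF]]]; case: (SG) => m [e [h [Sh EG]]].
have spg i := mem_span (Sg i); have sph j := mem_span (Sh j).
have spgU i := span_opf_compA (spg i) HUA.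
have sphU j := span_opf_compB (sph j) HUB.
rewrite {1}EF (linear_on_lin_comb (star_linear_l SG)) //.
rewrite EF (linear_on_lin_comb (star_linear_l (span_opf_compB SG HUB))) //.
extensionality psi; apply: eq_bigr => i _; congr (_ * _).
rewrite EG !(linear_on_lin_comb (star_linear_r _)) //; last exact: spgU.
apply: eq_bigr => j _; congr (_ * _).
case: Hstar => _ _ _ _ /(_ _ _ _ _ (Sg i) (Sh j) HUA HUB).
by move/(congr1 (fun f => f psi)).
Qed.

Lemma star_unit_const (b : R) :
  star (@unit_fun R dA) (fun _ => b) = (fun _ => b).
Proof.
case: Hstar => _ _ _ unit_law _.
rewrite (linear_on_const (star_linear_r (mem_span SA_unit))) ?unit_law; last exact: SB_unit.
by extensionality psi; rewrite /unit_fun mulr1.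
Qed.

Section ProductBasis.
Variables (n m : nat) (bA : 'I_n -> ray_fun R dA) (bB : 'I_m -> ray_fun R dB).
Hypotheses (BA : is_basis SA bA) (BB : is_basis SB bB)
  (BAB : is_basis SAB (fun ij : 'I_n * 'I_m => star (bA ij.1) (bB ij.2))).

Definition slice_sum (f : 'I_m -> ray_fun R dA) : ray_fun R (dA * dB) :=
  fun psi => \sum_(j < m) star (f j) (bB j) psi.

Let spanA i : Defs.span SA (bA i). Proof. by case: BA. Qed.
Let spanB j : Defs.span SB (bB j). Proof. by case: BB. Qed.

Lemma lin_comb_product (c : 'I_n * 'I_m -> R) :
  lin_comb c (fun ij : 'I_n * 'I_m => star (bA ij.1) (bB ij.2))
  = slice_sum (fun j => lin_comb (fun i => c (i, j)) bA).
Proof.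
extensionality psi; rewrite /slice_sum.
under [RHS]eq_bigr => j _ do rewrite (linear_on_lin_comb (star_linear_l (spanB j))) //.
by rewrite /lin_comb exchange_big pair_big; apply: eq_bigr => -[i j].
Qed.

Lemma span_slice_sum w :
  Defs.span SAB w -> exists f, (forall j, Defs.span SA (f j)) /\ w = slice_sum f.
Proof.
move=> /(basis_coord BAB) [c ->]; rewrite lin_comb_product.
by eexists; split; last reflexivity; move=> j; exact: span_lin_comb.
Qed.

Lemma slice_sum_eq0 f : (forall j, Defs.span SA (f j)) ->
  slice_sum f = (fun _ => 0) -> forall j, f j = (fun _ => 0).
Proof.
move=> Sf f0.
have /choice [c Ec] : forall j, exists c, f j = lin_comb c bA.
  by move=> j; exact: basis_coord BA (Sf j).
have c0 : lin_comb (fun ij : 'I_n * 'I_m => c ij.2 ij.1)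
   (fun ij => star (bA ij.1) (bB ij.2)) = (fun _ => 0).
  by rewrite lin_comb_product -f0; congr slice_sum; extensionality j; rewrite Ec.
case: BAB => _ indep _ j; extensionality psi; rewrite Ec /lin_comb big1 // => i _.
by rewrite (indep _ c0 (i, j)) mul0r.
Qed.

Lemma slice_sum_inj f g :
  (forall j, Defs.span SA (f j)) -> (forall j, Defs.span SA (g j)) ->
  slice_sum f = slice_sum g -> forall j, f j = g j.
Proof.
move=> Sf Sg fg j.
pose h j psi := -1 * f j psi + g j psi.
have Sh k : Defs.span SA (h k) := (span_lin_closed SA).2 _ _ _ (Sf k) (Sg k).
have h0 : slice_sum h = (fun _ => 0).
  extensionality psi; rewrite /slice_sum /h.
  under eq_bigr => k _ do rewrite (star_linear_l (spanB k)) //=.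
  rewrite big_split /= -mulr_sumr.
  by move: (congr1 (fun F => F psi) fg); rewrite /slice_sum => ->; rewrite mulN1r addNr.
extensionality psi; move: (congr1 (fun F => F psi) (slice_sum_eq0 Sh h0 j)).
by rewrite /h /= mulN1r addrC => /eqP; rewrite subr_eq0 => /eqP.
Qed.

Lemma slice_sum_opf_comp f U : (forall j, Defs.span SA (f j)) -> is_SU U ->
  opf_comp (slice_sum f) (U *t 1%:M) = slice_sum (fun j => opf_comp (f j) U).
Proof.
move=> Sf HU; extensionality psi; apply: eq_bigr => j _.
by rewrite -[in RHS](opf_comp1 (bB j)) -star_equivariant //; exact: is_SU1.
Qed.

Lemma slice_sum_invariant f : (forall j, Defs.span SA (f j)) ->
  (forall U, is_SU U -> opf_comp (slice_sum f) (U *t 1%:M) = slice_sum f) ->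
  forall j U, is_SU U -> opf_comp (f j) U = f j.
Proof.
move=> Sf f_inv j U HU.
apply: (slice_sum_inj (f := fun k => opf_comp (f k) U)) => // [k|].
  exact: span_opf_compA.
by rewrite -slice_sum_opf_comp ?f_inv.
Qed.

Lemma slice_sum_const (a : 'I_m -> R) :
  slice_sum (fun j _ => a j) = star (@unit_fun R dA) (lin_comb a bB).
Proof.
rewrite (linear_on_lin_comb (star_linear_r (mem_span SA_unit))) //.
extensionality psi; apply: eq_bigr => j _.
by rewrite (linear_on_const (star_linear_l (spanB j))) //; exact: SA_unit.
Qed.

Lemma star_unit_inj g g' : (0 < dA)%N -> Defs.span SB g -> Defs.span SB g' ->
  star (@unit_fun R dA) g = star (@unit_fun R dA) g' -> g = g'.
Proof.
move=> dA_gt0 /(basis_coord BB) [a ->] /(basis_coord BB) [a' ->].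
rewrite -!slice_sum_const => eq_slices.
have eq_a j : a j = a' j.
  apply: const_ray_fun_inj dA_gt0 _; apply: slice_sum_inj eq_slices j => k;
  exact: span_const SA_unit.
by extensionality psi; apply: eq_bigr => j _; rewrite eq_a.
Qed.

Lemma star_unit_invariant g : (0 < dA)%N -> Defs.span SB g ->
  (forall U, is_SU U ->
     opf_comp (star (@unit_fun R dA) g) (1%:M *t U) = star (@unit_fun R dA) g) ->
  forall U, is_SU U -> opf_comp g U = g.
Proof.
move=> dA_gt0 Sg g_inv U HU.
apply: star_unit_inj => //; first exact: span_opf_compB.
rewrite -[in LHS](opf_comp1 (@unit_fun R dA)) -star_equivariant ?g_inv //.
- exact: mem_span SA_unit.
- exact: is_SU1.
Qed.

End ProductBasis.

End Product.

Theorem mainTheorem5 (R : realType) (dA dB : nat)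
  (SA : ray_fun R dA -> Prop) (SB : ray_fun R dB -> Prop)
  (SAB : ray_fun R (dA * dB) -> Prop)
  (star : ray_fun R dA -> ray_fun R dB -> ray_fun R (dA * dB))
  (W : ray_fun R (dA * dB) -> Prop) :
  OPF_set SA -> OPF_set SB -> OPF_set SAB ->
  OPF_product SA SB SAB star ->
  affine_rep SAB W ->
  (exists w, W w /\ w <> (fun _ => 0) /\
     forall (UA : 'M[R[i]]_dA) (UB : 'M[R[i]]_dB),
       is_SU UA -> is_SU UB -> opf_comp w (UA *t UB) = w) ->
  forall n m (bA : 'I_n -> ray_fun R dA) (bB : 'I_m -> ray_fun R dB),
    is_basis SA bA -> is_basis SB bB ->
    ~ is_basis SAB (fun ij : 'I_n * 'I_m => star (bA ij.1) (bB ij.2)).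
Proof.
move=> HA HB _ Hstar [W_span [_ [_ [_ [W_const _]]]]] [w [Ww [w_neq0 w_inv]]]
  n m bA bB BA BB BAB.
have dA_gt0 : (0 < dA)%N.
  by rewrite lt0n; apply/eqP => dA0; apply/w_neq0/ray_fun_dim0; rewrite dA0.
have [f [Sf w_slices]] := span_slice_sum Hstar BA BB BAB (W_span _ Ww).
have /choice [a f_const] : forall j, exists a : R, f j = (fun _ => a).
  move=> j; apply: (invariant_span_const HA (Sf j)).
  apply: (slice_sum_invariant Hstar HA HB BA BB BAB Sf) => U HU.
  by rewrite -w_slices w_inv //; exact: is_SU1.
have w_star : w = star (@unit_fun R dA) (lin_comb a bB).
  by rewrite w_slices -(slice_sum_const Hstar HA BB); congr slice_sum; extensionality j.
have Sg : Defs.span SB (lin_comb a bB) by apply: span_lin_comb; case: BB.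
have [b g_const] : exists b : R, lin_comb a bB = (fun _ => b).
  apply: (invariant_span_const HB Sg).
  apply: (star_unit_invariant Hstar HA HB BA BB BAB dA_gt0 Sg) => U HU.
  by rewrite -w_star w_inv //; exact: is_SU1.
rewrite g_const (star_unit_const Hstar HA HB) in w_star.
by apply: w_neq0; rewrite w_star (W_const b) // -w_star.
Qed.
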